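(* Let $X\subseteq\mathbb{R}^n$ be r.e. open and let $f:X\to\mathbb{R}^m$ be computable and open. If the restriction of $\mathrm{Moo}_f$ to $(X\cap\mathbb{Q}^n)\times\mathbb{N}$ is $(\nu^n\times\nu\to\rho_<)$-computable, then $f$ is effectively open.
   Context: $\mathrm{Moo}_f(\vec x,k):=\sup\{s\ge0:\overline{B}(f(\vec x),s)\subseteq f[B(\vec x,2^{-k})\cap X]\}$, with $B,\overline{B}$ the open and closed Euclidean balls. Type-2 computability (Weihrauch): $\nu$ is the standard notation of $\mathbb{N}$ and $\nu^n$ the induced notation of rational vectors; $\rho_<$ represents a real by a sequence of rationals converging to it from below; $\theta^d_<$ represents open subsets of $\mathbb{R}^d$ by lists of rational centers and radii of open balls with union the set. $X$ r.e. open: has a computable $\theta^n_<$-name. $f$ effectively open: $U\mapsto f[U]$ on open $U\subseteq X$ is $(\theta^n_<\to\theta^m_<)$-computable. *)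

From HB Require Import structures.
From mathcomp Require Import all_boot all_order all_algebra.
From mathcomp Require Import all_classical all_reals.
From mathcomp Require Import ereal Rstruct.
From Stdlib Require Rdefinitions.
Notation R := Rdefinitions.R.

Set Implicit Arguments. Unset Strict Implicit. Unset Printing Implicit Defensive.
Import Order.TTheory GRing.Theory Num.Theory.
Local Open Scope ring_scope.
Local Open Scope classical_set_scope.

Definition npair (x y : nat) : nat := ((x + y) * (x + y).+1)./2 + y.

(* enumeration of nat*nat along diagonals; inverse of npair *)
Fixpoint nunpair (c : nat) : nat * nat :=
  match c with
  | 0 => (0, 0)
  | c'.+1 => match nunpair c' with
             | (0, y) => (y.+1, 0)
             | (x'.+1, y) => (x', y.+1)
             end
  end.

(* Partial recursive functions relative to an oracle p : nat -> nat.  *)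
(* (Kleene basis with pairing; with the oracle this gives exactly the *)
(* Type-2 computable functions on Baire space, total-output case.)    *)
Inductive prog : Type :=
| PZero | PSucc | PId | PFst | PSnd | POracle
| PPair of prog & prog
| PComp of prog & prog
| PRec of prog & prog
| PMu of prog.

Inductive eval (p : nat -> nat) : prog -> nat -> nat -> Prop :=
| eZero x : eval p PZero x 0
| eSucc x : eval p PSucc x x.+1
| eId x : eval p PId x x
| eFst x : eval p PFst x (nunpair x).1
| eSnd x : eval p PSnd x (nunpair x).2
| eOracle x : eval p POracle x (p x)
| ePair f g x a b : eval p f x a -> eval p g x b -> eval p (PPair f g) x (npair a b)
| eComp f g x y z : eval p g x y -> eval p f y z -> eval p (PComp f g) x z
| eRec f g x n y : evrec p f g x n y -> eval p (PRec f g) (npair x n) y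
| eMu f x n : eval p f (npair x n) 0 ->
    (forall i, (i < n)%N -> exists v, v <> 0%N /\ eval p f (npair x i) v) ->
    eval p (PMu f) x n
with evrec (p : nat -> nat) : prog -> prog -> nat -> nat -> nat -> Prop :=
| rZero f g x y : eval p f x y -> evrec p f g x 0 y
| rSucc f g x n y z : evrec p f g x n y -> eval p g (npair x (npair n y)) z ->
    evrec p f g x n.+1 z.

Definition computes (e : prog) (p q : nat -> nat) : Prop :=
  forall k, eval p e k (q k).

Definition computable_seq (q : nat -> nat) : Prop :=
  exists e, computes e (fun _ => 0%N) q.

Definition zz (a : nat) : R :=
  if odd a then - (a.+1./2)%:R else (a./2)%:R.

(* every rational number arises (notation of Q, as real numbers) *)
Definition qdec (c : nat) : R :=
  let: (a, b) := nunpair c in zz a / (b.+1)%:R.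

Definition qpos (c : nat) : R :=
  let: (a, b) := nunpair c in (a.+1)%:R / (b.+1)%:R.

Fixpoint vcomp (c i : nat) : nat :=
  match i with
  | 0 => (nunpair c).1
  | i'.+1 => vcomp (nunpair c).2 i'
  end.

Definition vdec (n : nat) (c : nat) : 'I_n -> R := fun i => qdec (vcomp c i).
Arguments vdec : clear implicits.

Definition edist (n : nat) (x y : 'I_n -> R) : R :=
  Num.sqrt (\sum_(i < n) (x i - y i) ^+ 2).

Definition eball (n : nat) (x : 'I_n -> R) (r : R) : set ('I_n -> R) :=
  [set y | edist x y < r].
Definition ecball (n : nat) (x : 'I_n -> R) (r : R) : set ('I_n -> R) :=
  [set y | edist x y <= r].

Definition eopen (n : nat) (U : set ('I_n -> R)) : Prop :=
  forall x, U x -> exists2 r : R, 0 < r & eball x r `<=` U.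

Definition rhon_name (n : nat) (p : nat -> nat) (x : 'I_n -> R) : Prop :=
  forall k, edist (vdec n (p k)) x <= 2 ^- k.

(* theta^n_< : p lists rational balls (code 0 = no ball) whose union is U *)
Definition bdec (n : nat) (c : nat) : set ('I_n -> R) :=
  match c with
  | 0 => set0
  | c'.+1 => eball (vdec n (nunpair c').1) (qpos (nunpair c').2)
  end.
Arguments bdec : clear implicits.

Definition theta_name (n : nat) (p : nat -> nat) (U : set ('I_n -> R)) : Prop :=
  forall x, U x <-> exists k, bdec n (p k) x.

(* rho_< : rationals approximating v from below, with supremum v
   (extended to v = +oo as unbounded sequences) *)
Definition rholt_name (q : nat -> nat) (v : \bar R) : Prop :=
  (forall j, ((qdec (q j))%:E <= v)%E) /\
  (forall t : R, (t%:E < v)%E -> exists j, t < qdec (q j)).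

Definition Moo (n m : nat) (X : set ('I_n -> R)) (f : ('I_n -> R) -> ('I_m -> R))
  (x : 'I_n -> R) (k : nat) : \bar R :=
  ereal_sup (@EFin R @`
    [set s : R | 0 <= s /\ ecball (f x) s `<=` f @` (eball x (2 ^- k) `&` X)]).

Definition re_open (n : nat) (X : set ('I_n -> R)) : Prop :=
  exists p, computable_seq p /\ theta_name p X.

Definition computable_on (n m : nat) (X : set ('I_n -> R))
  (f : ('I_n -> R) -> ('I_m -> R)) : Prop :=
  exists e, forall x p, X x -> rhon_name p x ->
    exists q, computes e p q /\ rhon_name q (f x).

Definition open_map_on (n m : nat) (X : set ('I_n -> R))
  (f : ('I_n -> R) -> ('I_m -> R)) : Prop :=
  forall U, eopen U -> U `<=` X -> eopen (f @` U).

Definition effectively_open (n m : nat) (X : set ('I_n -> R))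
  (f : ('I_n -> R) -> ('I_m -> R)) : Prop :=
  exists e, forall U p, eopen U -> U `<=` X -> theta_name p U ->
    exists q, computes e p q /\ theta_name q (f @` U).

Definition moo_lower_computable (n m : nat) (X : set ('I_n -> R))
  (f : ('I_n -> R) -> ('I_m -> R)) : Prop :=
  exists e, forall c k, X (vdec n c) ->
    exists q, (forall j, eval (fun _ => 0%N) e (npair (npair c k) j) (q j)) /\
              rholt_name q (Moo X f (vdec n c) k).

From Pilot Require Import Defs.
From mathcomp Require Import all_boot all_order all_algebra all_classical all_reals.
From mathcomp Require Import ereal Rstruct zify ring lra.
(* Re-imported so that the program semantics [eval] is not shadowed by the
   analysis library's [eval]. *)
Import Defs.

(* Given a name of an open U included in X, list the balls B(a, 2^-t) where
   a approximates f(c) to within 2^-(t+2), for every rational c and level k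
   such that the closed ball B(c, 2^-k) lies inside a listed ball of U and
   some lower approximation of Moo_f(c, k) exceeds 2 * 2^-t.  Such a ball lies
   in the closed ball of radius Moo_f(c, k) around f(c), hence in
   f[B(c, 2^-k) cap X], which is contained in f[U].  Conversely, for x in U,
   openness of f bounds Moo_f(c, k) from below uniformly for the c close to x
   whose images are close to f(x), and continuity of the computable f lets a
   rational c close enough to x produce a listed ball containing f(x).  All
   the tests are decidable in rational arithmetic, and the approximations of
   f(c) and Moo_f(c, k) come from the given programs, run with c hard-wired
   in place of the oracle. *)

Set Implicit Arguments. Unset Strict Implicit. Unset Printing Implicit Defensive.
Import Order.TTheory GRing.Theory Num.Theory.

Lemma half_triangleS s : (s.+1 * s.+2)./2 = (s * s.+1)./2 + s.+1.
Proof.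
have -> : s.+1 * s.+2 = s * s.+1 + (s.+1).*2 by rewrite -mul2n; lia.
by rewrite halfD odd_double andbF add0n doubleK.
Qed.

Lemma npair_nunpairS c :
  npair (nunpair c.+1).1 (nunpair c.+1).2 = (npair (nunpair c).1 (nunpair c).2).+1.
Proof.
rewrite /=; case: (nunpair c) => [[|x] y] /=; rewrite /npair.
- by rewrite !addn0 add0n half_triangleS addnS.
- rewrite !addnS addSn; lia.
Qed.

Lemma nunpairK c : npair (nunpair c).1 (nunpair c).2 = c.
Proof. by elim: c => [|c IHc] //; rewrite npair_nunpairS IHc. Qed.

Lemma nunpair_surj x y : exists c, nunpair c = (x, y).
Proof.
suff diag s j : j <= s -> exists c, nunpair c = (s - j, j).
  by have [c] := diag (x + y) y (leq_addl _ _); rewrite addnK; exists c.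
elim: s j => [|s IHs] j; first by rewrite leqn0 => /eqP ->; exists 0.
elim: j => [|j IHj] lejs.
  by have [c Hc] := IHs s (leqnn s); exists c.+1; rewrite /= Hc subnn subn0.
have [c Hc] := IHj (ltnW lejs); exists c.+1; rewrite /= Hc.
by have -> : s.+1 - j = (s - j).+1 by lia.
Qed.

Lemma npairK x y : nunpair (npair x y) = (x, y).
Proof.
have [c Hc] := nunpair_surj x y.
by have := nunpairK c; rewrite Hc /= => ->.
Qed.

Lemma npair_inj x y x' y' : npair x y = npair x' y' -> x = x' /\ y = y'.
Proof. by move=> E; have := npairK x y; rewrite E npairK => -[]. Qed.

Section EvalInduction.
Variable p : nat -> nat.
Variable P : prog -> nat -> nat -> Prop.
Variable Q : prog -> prog -> nat -> nat -> nat -> Prop.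
Hypothesis hZero : forall x, P PZero x 0.
Hypothesis hSucc : forall x, P PSucc x x.+1.
Hypothesis hId : forall x, P PId x x.
Hypothesis hFst : forall x, P PFst x (nunpair x).1.
Hypothesis hSnd : forall x, P PSnd x (nunpair x).2.
Hypothesis hOracle : forall x, P POracle x (p x).
Hypothesis hPair : forall f g x a b,
  eval p f x a -> P f x a -> eval p g x b -> P g x b -> P (PPair f g) x (npair a b).
Hypothesis hComp : forall f g x y z,
  eval p g x y -> P g x y -> eval p f y z -> P f y z -> P (PComp f g) x z.
Hypothesis hRec : forall f g x n y,
  evrec p f g x n y -> Q f g x n y -> P (PRec f g) (npair x n) y.
Hypothesis hMu : forall f x n,
  eval p f (npair x n) 0 -> P f (npair x n) 0 ->
  (forall i, i < n -> exists v, [/\ v <> 0, eval p f (npair x i) v & P f (npair x i) v]) ->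
  P (PMu f) x n.
Hypothesis hRecZero : forall f g x y, eval p f x y -> P f x y -> Q f g x 0 y.
Hypothesis hRecSucc : forall f g x n y z,
  evrec p f g x n y -> Q f g x n y ->
  eval p g (npair x (npair n y)) z -> P g (npair x (npair n y)) z -> Q f g x n.+1 z.

(* The generated scheme gives no induction hypothesis under the existential
   of [eMu], hence this hand-written mutual fixpoint. *)
Fixpoint eval_mut_ind e x y (H : eval p e x y) {struct H} : P e x y
with evrec_mut_ind f g x n y (H : evrec p f g x n y) {struct H} : Q f g x n y.
Proof.
- destruct H as [x0|x0|x0|x0|x0|x0|f g x0 a b Ha Hb|f g x0 y0 z Hy Hz
                |f g x0 n y0 Hr|f x0 n H0 Hlt].
  + exact: hZero.
  + exact: hSucc.
  + exact: hId.
  + exact: hFst.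
  + exact: hSnd.
  + exact: hOracle.
  + exact: hPair Ha (eval_mut_ind _ _ _ Ha) Hb (eval_mut_ind _ _ _ Hb).
  + exact: hComp Hy (eval_mut_ind _ _ _ Hy) Hz (eval_mut_ind _ _ _ Hz).
  + exact: hRec Hr (evrec_mut_ind _ _ _ _ _ Hr).
  + apply: hMu H0 (eval_mut_ind _ _ _ H0) _ => i lt_in.
    destruct (Hlt i lt_in) as [v [v0 Hv]].
    by exists v; split; last exact: eval_mut_ind Hv.
- destruct H as [f0 g0 x0 y0 Hy|f0 g0 x0 n0 y0 z Hr Hz].
  + exact: hRecZero Hy (eval_mut_ind _ _ _ Hy).
  + exact: hRecSucc Hr (evrec_mut_ind _ _ _ _ _ Hr) Hz (eval_mut_ind _ _ _ Hz).
Qed.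

End EvalInduction.

Lemma eval_functional p e x y y' : eval p e x y -> eval p e x y' -> y = y'.
Proof.
move=> H; move: y'; apply: (@eval_mut_ind p
  (fun e x y => forall y', eval p e x y' -> y = y')
  (fun f g x n y => forall y', evrec p f g x n y' -> y = y')) H => {e x y}.
- by move=> x y' H; inversion H.
- by move=> x y' H; inversion H.
- by move=> x y' H; inversion H.
- by move=> x y' H; inversion H.
- by move=> x y' H; inversion H.
- by move=> x y' H; inversion H.
- move=> f g x a b _ IHa _ IHb y' H; inversion H; subst.
  by rewrite (IHa _ ltac:(eassumption)) (IHb _ ltac:(eassumption)).
- move=> f g x y z _ IHy _ IHz z' H; inversion H; subst.
  match goal with H1 : eval p g x ?w |- _ => have E := IHy _ H1 end; subst.
  exact: IHz.
- move=> f g x n y _ IH y' H; inversion H; subst.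
  match goal with H0 : npair _ _ = npair _ _ |- _ => have [E1 E2] := npair_inj H0 end.
  by subst; apply: IH.
- move=> f x n _ IH0 IHlt y' H; inversion H; subst.
  case: (ltngtP n y') => // lt_n.
  + by have [v [v0 Hv]] := H2 n lt_n; have E := IH0 _ Hv; subst.
  + by have [v [v0 _ IHv]] := IHlt _ lt_n; have E := IHv _ H1; subst.
- by move=> f g x y _ IH y' H; inversion H; subst; apply: IH.
- move=> f g x n y z _ IH _ IHz z' H; inversion H; subst.
  match goal with H1 : evrec p f g x n ?w |- _ => have E := IH _ H1 end; subst.
  exact: IHz.
Qed.

Definition agree_below (p p' : nat -> nat) N := forall i, i < N -> p' i = p i.

Lemma agree_belowW p p' N M : N <= M -> agree_below p p' M -> agree_below p p' N.
Proof. by move=> le_NM H i lt_iN; apply: H; apply: leq_trans le_NM. Qed.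

Lemma uniform_bound k (B : nat -> nat -> Prop) :
  (forall i N M, N <= M -> B i N -> B i M) ->
  (forall i, i < k -> exists N, B i N) -> exists N, forall i, i < k -> B i N.
Proof.
move=> mono; elim: k => [|k IHk] H; first by exists 0.
have [N1 H1] := IHk (fun i lt_ik => H i (ltnW lt_ik)).
have [N2 H2] := H k (leqnn _).
exists (maxn N1 N2) => i; rewrite ltnS leq_eqVlt => /orP[/eqP -> | lt_ik].
- exact: mono (leq_maxr _ _) H2.
- exact: mono (leq_maxl _ _) (H1 _ lt_ik).
Qed.

Lemma eval_use p e x y : eval p e x y ->
  exists N, forall p', agree_below p p' N -> eval p' e x y.
Proof.
move=> H.
pose agree_max N1 N2 p' (A : agree_below p p' (maxn N1 N2)) :=
  conj (agree_belowW (leq_maxl N1 N2) A) (agree_belowW (leq_maxr N1 N2) A).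
apply: (@eval_mut_ind p
  (fun e x y => exists N, forall p', agree_below p p' N -> eval p' e x y)
  (fun f g x n y => exists N, forall p', agree_below p p' N -> evrec p' f g x n y)) H
  => {e x y}.
- by move=> x; exists 0 => p' _; constructor.
- by move=> x; exists 0 => p' _; constructor.
- by move=> x; exists 0 => p' _; constructor.
- by move=> x; exists 0 => p' _; constructor.
- by move=> x; exists 0 => p' _; constructor.
- by move=> x; exists x.+1 => p' A; rewrite -(A x (leqnn _)); constructor.
- move=> f g x a b _ [N1 H1] _ [N2 H2]; exists (maxn N1 N2) => p' /agree_max[A1 A2].
  by constructor; [apply: H1 | apply: H2].
- move=> f g x y z _ [N1 H1] _ [N2 H2]; exists (maxn N1 N2) => p' /agree_max[A1 A2].
  by econstructor; [apply: H1 | apply: H2].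
- by move=> f g x n y _ [N H]; exists N => p' A; constructor; apply: H.
- move=> f x n _ [N1 H1] Hlt.
  have [N2 H2] : exists N, forall i, i < n -> forall p', agree_below p p' N ->
      exists v, v <> 0 /\ eval p' f (npair x i) v.
    apply: uniform_bound => [i N M le_NM HN p' A|i lt_in].
      exact/HN/(agree_belowW le_NM A).
    have [v [v0 _ [N HN]]] := Hlt i lt_in.
    by exists N => p' A; exists v; split => //; apply: HN.
  by exists (maxn N1 N2) => p' /agree_max[A1 A2]; constructor; [apply: H1 | move=> i /H2; apply].
- by move=> f g x y _ [N H]; exists N => p' A; constructor; apply: H.
- move=> f g x n y z _ [N1 H1] _ [N2 H2]; exists (maxn N1 N2) => p' /agree_max[A1 A2].
  by econstructor; [apply: H1 | apply: H2].
Qed.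

Definition prog_assocr := PPair (PComp PFst PFst) (PPair (PComp PSnd PFst) PSnd).
Definition prog_assocl := PPair (PPair PFst (PComp PFst PSnd)) (PComp PSnd PSnd).

Fixpoint inline_oracle (e : prog) : prog :=
  match e with
  | PZero => PZero
  | PSucc => PComp PSucc PSnd
  | PId => PSnd
  | PFst => PComp PFst PSnd
  | PSnd => PComp PSnd PSnd
  | POracle => PFst
  | PPair f g => PPair (inline_oracle f) (inline_oracle g)
  | PComp f g => PComp (inline_oracle f) (PPair PFst (inline_oracle g))
  | PRec f g => PComp (PRec (inline_oracle f) (PComp (inline_oracle g) prog_assocr))
                      prog_assocl
  | PMu f => PMu (PComp (inline_oracle f) prog_assocr)
  end.

Lemma eval_fst p a b : eval p PFst (npair a b) a.
Proof. by have := eFst p (npair a b); rewrite npairK. Qed.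

Lemma eval_snd p a b : eval p PSnd (npair a b) b.
Proof. by have := eSnd p (npair a b); rewrite npairK. Qed.

Lemma eval_assocr p c x m :
  eval p prog_assocr (npair (npair c x) m) (npair c (npair x m)).
Proof.
constructor; first by econstructor; [exact: eval_fst | exact: eval_fst].
constructor; first by econstructor; [exact: eval_fst | exact: eval_snd].
exact: eval_snd.
Qed.

Lemma eval_assocl p c x m :
  eval p prog_assocl (npair c (npair x m)) (npair (npair c x) m).
Proof.
constructor; first constructor; first exact: eval_fst.
- by econstructor; [exact: eval_snd | exact: eval_fst].
- by econstructor; [exact: eval_snd | exact: eval_snd].
Qed.

Lemma eval_inline_oracle c e x y p :
  eval (fun _ => c) e x y -> eval p (inline_oracle e) (npair c x) y.
Proof.
move=> H; move: p; apply: (@eval_mut_ind (fun _ => c)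
  (fun e x y => forall p, eval p (inline_oracle e) (npair c x) y)
  (fun f g x n y => forall p,
     evrec p (inline_oracle f) (PComp (inline_oracle g) prog_assocr) (npair c x) n y))
  H => {e x y}.
- by move=> x p; constructor.
- by move=> x p /=; econstructor; [exact: eval_snd | constructor].
- by move=> x p /=; exact: eval_snd.
- by move=> x p /=; econstructor; [exact: eval_snd | constructor].
- by move=> x p /=; econstructor; [exact: eval_snd | constructor].
- by move=> x p /=; exact: eval_fst.
- by move=> f g x a b _ IHa _ IHb p /=; constructor.
- move=> f g x y z _ IHy _ IHz p /=; econstructor; last exact: IHz.
  by constructor; [exact: eval_fst |].
- by move=> f g x n y _ IH p /=; econstructor; [exact: eval_assocl | constructor].
- move=> f x n _ IH0 IHlt p /=; constructor.
  + by econstructor; [exact: eval_assocr |].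
  + move=> i lt_in; have [v [v0 _ IHv]] := IHlt i lt_in.
    by exists v; split => //; econstructor; [exact: eval_assocr |].
- by move=> f g x y _ IH p; constructor.
- move=> f g x n y z _ IH _ IHz p; econstructor; first exact: IH.
  by econstructor; [exact: eval_assocr |].
Qed.

Definition pcomputable (P : (nat -> nat) -> nat -> Prop)
  (F : (nat -> nat) -> nat -> nat) :=
  exists e, forall p x, P p x -> eval p e x (F p x).

Notation everywhere := (fun (_ : nat -> nat) (_ : nat) => True).

Section Closure.
Variable P : (nat -> nat) -> nat -> Prop.
Implicit Types F G A B : (nat -> nat) -> nat -> nat.
Notation pc := (pcomputable P).

Lemma pcomputable_ext F G : (forall p x, P p x -> F p x = G p x) -> pc F -> pc G.
Proof. by move=> E [e He]; exists e => p x Px; rewrite -E //; apply: He. Qed.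

Lemma pcomputable_prog A F e : pc A ->
  (forall p x, P p x -> eval p e (A p x) (F p x)) -> pc F.
Proof. by move=> [ea Ha] H; exists (PComp e ea) => p x Px; econstructor; eauto. Qed.

Lemma pcomputable0 : pc (fun _ _ => 0).
Proof. by exists PZero => p x _; constructor. Qed.

Lemma pcomputable_id : pc (fun _ x => x).
Proof. by exists PId => p x _; constructor. Qed.

Lemma pcomputableS A : pc A -> pc (fun p x => (A p x).+1).
Proof. by move=> HA; apply: (pcomputable_prog (e := PSucc) HA) => p x _; constructor. Qed.

Lemma pcomputable_fst A : pc A -> pc (fun p x => (nunpair (A p x)).1).
Proof. by move=> HA; apply: (pcomputable_prog (e := PFst) HA) => p x _; constructor. Qed.

Lemma pcomputable_snd A : pc A -> pc (fun p x => (nunpair (A p x)).2).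
Proof. by move=> HA; apply: (pcomputable_prog (e := PSnd) HA) => p x _; constructor. Qed.

Lemma pcomputable_oracle A : pc A -> pc (fun p x => p (A p x)).
Proof. by move=> HA; apply: (pcomputable_prog (e := POracle) HA) => p x _; constructor. Qed.

Lemma pcomputable_pair A B : pc A -> pc B -> pc (fun p x => npair (A p x) (B p x)).
Proof. by move=> [ea Ha] [eb Hb]; exists (PPair ea eb) => p x Px; constructor; auto. Qed.

Lemma pcomputable_const k : pc (fun _ _ => k).
Proof. by elim: k => [|k IHk]; [exact: pcomputable0 | exact: pcomputableS]. Qed.

Lemma pcomputable_binop (h : nat -> nat -> nat) A B :
  pcomputable everywhere (fun _ z => h (nunpair z).1 (nunpair z).2) ->
  pc A -> pc B -> pc (fun p x => h (A p x) (B p x)).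
Proof.
move=> [eh Hh] HA HB; apply: (pcomputable_prog (e := eh) (pcomputable_pair HA HB)).
by move=> p x _; have := Hh p (npair (A p x) (B p x)) I; rewrite npairK.
Qed.

End Closure.

Lemma pcomputable_rec (b : nat -> nat) (s : nat -> nat -> nat -> nat)
    (h : nat -> nat -> nat) :
  (forall a, h a 0 = b a) -> (forall a n, h a n.+1 = s a n (h a n)) ->
  pcomputable everywhere (fun _ a => b a) ->
  pcomputable everywhere
    (fun _ z => s (nunpair z).1 (nunpair (nunpair z).2).1 (nunpair (nunpair z).2).2) ->
  pcomputable everywhere (fun _ z => h (nunpair z).1 (nunpair z).2).
Proof.
move=> h0 hS [eb Hb] [es Hs]; exists (PRec eb es) => p z _.
rewrite -{1}(nunpairK z); constructor.
set a := (nunpair z).1; elim: (nunpair z).2 => [|n IHn].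
  by rewrite h0; constructor; apply: Hb.
rewrite hS; econstructor; first exact: IHn.
by have := Hs p (npair a (npair n (h a n))) I; rewrite !npairK.
Qed.

Section NatArithmetic.
Let arg1 := pcomputable_fst (@pcomputable_id everywhere).
Let arg2 := pcomputable_snd (@pcomputable_id everywhere).
Let rec_n := pcomputable_fst arg2.
Let rec_y := pcomputable_snd arg2.

Lemma addn_pcomputable : pcomputable everywhere (fun _ z => (nunpair z).1 + (nunpair z).2).
Proof.
apply: (@pcomputable_rec id (fun _ _ y => y.+1)) => [a|a n||]; rewrite ?addn0 ?addnS //.
  exact: pcomputable_id.
exact: pcomputableS rec_y.
Qed.

Lemma pcomputableD P A B : pcomputable P A -> pcomputable P B ->
  pcomputable P (fun p x => A p x + B p x).
Proof. exact: pcomputable_binop addn_pcomputable. Qed.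

Lemma muln_pcomputable : pcomputable everywhere (fun _ z => (nunpair z).1 * (nunpair z).2).
Proof.
apply: (@pcomputable_rec (fun _ => 0) (fun a _ y => y + a)) => [a|a n||].
- by rewrite muln0.
- by rewrite mulnS addnC.
- exact: pcomputable0.
- exact: pcomputableD rec_y arg1.
Qed.

Lemma pcomputableM P A B : pcomputable P A -> pcomputable P B ->
  pcomputable P (fun p x => A p x * B p x).
Proof. exact: pcomputable_binop muln_pcomputable. Qed.

Lemma predn_pcomputable : pcomputable everywhere (fun _ z => (nunpair z).2.-1).
Proof.
by apply: (@pcomputable_rec (fun _ => 0) (fun _ n _ => n) (fun _ n => n.-1));
  [| | exact: pcomputable0 | exact: rec_n].
Qed.

Lemma pcomputable_pred P A : pcomputable P A -> pcomputable P (fun p x => (A p x).-1).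
Proof. exact: (pcomputable_binop (h := fun _ b => b.-1) predn_pcomputable (pcomputable0 P)). Qed.

Lemma subn_pcomputable : pcomputable everywhere (fun _ z => (nunpair z).1 - (nunpair z).2).
Proof.
apply: (@pcomputable_rec id (fun _ _ y => y.-1)) => [a|a n||]; rewrite ?subn0 ?subnS //.
  exact: pcomputable_id.
exact: pcomputable_pred rec_y.
Qed.

Lemma pcomputableB P A B : pcomputable P A -> pcomputable P B ->
  pcomputable P (fun p x => A p x - B p x).
Proof. exact: pcomputable_binop subn_pcomputable. Qed.

Lemma expn_pcomputable : pcomputable everywhere (fun _ z => (nunpair z).1 ^ (nunpair z).2).
Proof.
apply: (@pcomputable_rec (fun _ => 1) (fun a _ y => y * a)) => [//|a n||].
- by rewrite expnS mulnC.
- exact: pcomputable_const.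
- exact: pcomputableM rec_y arg1.
Qed.

Lemma pcomputableX P A B : pcomputable P A -> pcomputable P B ->
  pcomputable P (fun p x => A p x ^ B p x).
Proof. exact: pcomputable_binop expn_pcomputable. Qed.

Lemma odd_pcomputable : pcomputable everywhere (fun _ z => nat_of_bool (odd (nunpair z).2)).
Proof.
apply: (@pcomputable_rec (fun _ => 0) (fun _ _ y => 1 - y) (fun _ n => odd n)) => //.
- by move=> a n /=; case: (odd n).
- exact: pcomputable0.
- exact: pcomputableB (pcomputable_const _ 1) rec_y.
Qed.

Lemma pcomputable_odd P A : pcomputable P A ->
  pcomputable P (fun p x => nat_of_bool (odd (A p x))).
Proof. exact: (pcomputable_binop (h := fun _ b => odd b) odd_pcomputable (pcomputable0 P)). Qed.

Lemma half_pcomputable : pcomputable everywhere (fun _ z => (nunpair z).2./2).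
Proof.
apply: (@pcomputable_rec (fun _ => 0) (fun _ n y => y + odd n) (fun _ n => n./2)) => //.
- by move=> a n /=; rewrite uphalf_half addnC.
- exact: pcomputable0.
- exact: pcomputableD rec_y (pcomputable_odd rec_n).
Qed.

Lemma pcomputable_half P A : pcomputable P A -> pcomputable P (fun p x => (A p x)./2).
Proof. exact: (pcomputable_binop (h := fun _ b => b./2) half_pcomputable (pcomputable0 P)). Qed.

End NatArithmetic.

Section Comparison.
Variable P : (nat -> nat) -> nat -> Prop.
Implicit Types (A B F G : (nat -> nat) -> nat -> nat) (a b : (nat -> nat) -> nat -> bool).
Notation pc := (pcomputable P).

Lemma pcomputable_ltn A B : pc A -> pc B -> pc (fun p x => A p x < B p x).
Proof.
move=> HA HB; have H1 := pcomputable_const P 1.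
apply: pcomputable_ext (pcomputableB H1 (pcomputableB H1 (pcomputableB HB HA))).
by move=> p x _; case: ltnP => lt_or_ge; lia.
Qed.

Lemma pcomputable_andb a b : pc (fun p x => a p x) -> pc (fun p x => b p x) ->
  pc (fun p x => a p x && b p x).
Proof.
move=> Ha Hb; apply: pcomputable_ext (pcomputableM Ha Hb) => p x _.
by case: (a p x); case: (b p x).
Qed.

Lemma pcomputable_negb a : pc (fun p x => a p x) -> pc (fun p x => ~~ a p x).
Proof.
move=> Ha; apply: pcomputable_ext (pcomputableB (pcomputable_const P 1) Ha) => p x _.
by case: (a p x).
Qed.

Lemma pcomputable_eqb a b : pc (fun p x => a p x) -> pc (fun p x => b p x) ->
  pc (fun p x => a p x == b p x).
Proof.
move=> Ha Hb; have H1 := pcomputable_const P 1.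
apply: pcomputable_ext (pcomputableB H1 (pcomputableD (pcomputableB Ha Hb) (pcomputableB Hb Ha))).
by move=> p x _; case: (a p x); case: (b p x).
Qed.

Lemma pcomputable_if a F G : pc (fun p x => a p x) -> pc F -> pc G ->
  pc (fun p x => if a p x then F p x else G p x).
Proof.
move=> Ha HF HG; have H1 := pcomputable_const P 1.
apply: pcomputable_ext (pcomputableD (pcomputableM Ha HF) (pcomputableM (pcomputableB H1 Ha) HG)).
by move=> p x _; case: (a p x) => /=; lia.
Qed.

End Comparison.

Local Open Scope ring_scope.

Section Euclid.
Variable n : nat.
Implicit Types (a b u : 'I_n -> R) (x y z : 'I_n -> R).

Lemma cauchy_schwarz a b :
  (\sum_i a i * b i) ^+ 2 <= (\sum_i a i ^+ 2) * (\sum_i b i ^+ 2).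
Proof.
set S := \sum_i _; set A := \sum_i _; set B := \sum_i _.
have lagrange : \sum_i \sum_j (a i * b j - a j * b i) ^+ 2 = A * B + B * A - 2 * (S * S).
  rewrite /A /B /S !big_distrlr /= mulr_sumr -big_split -sumrB /=.
  apply: eq_bigr => i _; rewrite mulr_sumr -big_split -sumrB /=.
  by apply: eq_bigr => j _; ring.
have : 0 <= \sum_i \sum_j (a i * b j - a j * b i) ^+ 2.
  by apply: sumr_ge0 => i _; apply: sumr_ge0 => j _; apply: sqr_ge0.
by rewrite lagrange expr2; lra.
Qed.

Lemma minkowski a b : Num.sqrt (\sum_i (a i + b i) ^+ 2) <=
  Num.sqrt (\sum_i a i ^+ 2) + Num.sqrt (\sum_i b i ^+ 2).
Proof.
set S := \sum_i a i * b i; set A := \sum_i a i ^+ 2; set B := \sum_i b i ^+ 2.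
have A0 : 0 <= A by apply: sumr_ge0 => i _; apply: sqr_ge0.
have B0 : 0 <= B by apply: sumr_ge0 => i _; apply: sqr_ge0.
have expand : \sum_i (a i + b i) ^+ 2 = A + B + S *+ 2.
  by rewrite /A /B /S -sumrMnl -!big_split /=; apply: eq_bigr => i _; ring.
have le_S : S <= Num.sqrt A * Num.sqrt B.
  rewrite -sqrtrM // (le_trans (ler_norm S)) // -sqrtr_sqr ler_sqrt ?mulr_ge0 //.
  exact: cauchy_schwarz.
have sA := sqrtr_ge0 A; have sB := sqrtr_ge0 B.
rewrite expand -[_ + _ in leRHS]ger0_norm ?addr_ge0 // -sqrtr_sqr ler_sqrt ?sqr_ge0 //.
by rewrite sqrrD !sqr_sqrtr //; lra.
Qed.

Lemma edist_ge0 x y : 0 <= edist x y.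
Proof. exact: sqrtr_ge0. Qed.

Lemma edistC x y : edist x y = edist y x.
Proof. by rewrite /edist; congr Num.sqrt; apply: eq_bigr => i _; ring. Qed.

Lemma edistxx x : edist x x = 0.
Proof. by rewrite /edist big1 ?sqrtr0 // => i _; rewrite subrr expr0n. Qed.

Lemma edist_triangle x y z : edist x z <= edist x y + edist y z.
Proof.
rewrite /edist; have := minkowski (fun i => x i - y i) (fun i => y i - z i).
by congr (Num.sqrt _ <= _); apply: eq_bigr => i _; ring.
Qed.

Lemma sum_sqr_le_sqr_sum (r : seq 'I_n) u : (forall i, 0 <= u i) ->
  \sum_(i <- r) u i ^+ 2 <= (\sum_(i <- r) u i) ^+ 2.
Proof.
move=> u0; elim: r => [|i r IHr]; first by rewrite !big_nil expr0n.
have : 0 <= \sum_(j <- r) u j by apply: sumr_ge0.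
by rewrite !big_cons; have := u0 i; nra.
Qed.

Lemma edist_le_sum_dist x y : edist x y <= \sum_i `|x i - y i|.
Proof.
have S0 : 0 <= \sum_i `|x i - y i| by apply: sumr_ge0.
rewrite /edist -(ger0_norm S0) -sqrtr_sqr ler_sqrt ?sqr_ge0 //.
have := sum_sqr_le_sqr_sum (index_enum 'I_n) (fun i => normr_ge0 (x i - y i)).
by congr (_ <= _); apply: eq_bigr => i _; rewrite real_normK ?num_real.
Qed.

End Euclid.

Lemma eopen_eball n (x : 'I_n -> R) r : eopen (eball x r).
Proof.
move=> y xy; exists (r - edist x y); first by rewrite subr_gt0.
by move=> z yz; have := edist_triangle x y z; rewrite /eball /= in xy yz *; lra.
Qed.

Lemma eopenI n (U V : set ('I_n -> R)) : eopen U -> eopen V -> eopen (U `&` V).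
Proof.
move=> oU oV x [Ux Vx]; have [r1 r10 H1] := oU x Ux; have [r2 r20 H2] := oV x Vx.
exists (Num.min r1 r2); first by rewrite lt_min r10 r20.
move=> y xy; split; [apply: H1 | apply: H2]; apply: lt_le_trans xy _;
  by rewrite ge_min lexx ?orbT.
Qed.

Lemma pow2_gt0 k : 0 < 2 ^- k :> R.
Proof. by rewrite invr_gt0 exprn_gt0. Qed.

Lemma pow2S k : 2 ^- k.+1 = 2 ^- k / 2 :> R.
Proof. by rewrite exprS invfM mulrC. Qed.

Lemma pow2_le j k : (j <= k)%N -> 2 ^- k <= 2 ^- j :> R.
Proof. by move=> le_jk; rewrite lef_pV2 ?posrE ?exprn_gt0 // ler_eXn2l // ltr1n. Qed.

Lemma exists_pow2_lt (e : R) : 0 < e -> exists k, 2 ^- k < e.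
Proof.
move=> e0; set k := Num.Def.archi_bound e^-1; exists k.
have lt_k : e^-1 < k%:R by apply: archi_boundP; rewrite invr_ge0 ltW.
have lt_2k : (k%:R : R) < 2 ^+ k by rewrite -natrX ltr_nat ltn_expl.
rewrite -[e]invrK ltf_pV2 ?posrE ?invr_gt0 ?exprn_gt0 //; exact: lt_trans lt_2k.
Qed.

Definition zz_abs (a : nat) : nat := (a + odd a)./2.

Lemma zzE a : zz a = if odd a then - (zz_abs a)%:R else (zz_abs a)%:R.
Proof. by rewrite /zz /zz_abs; case: (odd a); rewrite ?addn1 ?addn0. Qed.

Definition qdiff_num (u v : nat) : nat :=
  let a := (nunpair u).1 in let b := (nunpair u).2 in
  let a' := (nunpair v).1 in let b' := (nunpair v).2 in
  if odd a == odd a' then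
    ((zz_abs a * b'.+1 - zz_abs a' * b.+1) + (zz_abs a' * b.+1 - zz_abs a * b'.+1))%N
  else (zz_abs a * b'.+1 + zz_abs a' * b.+1)%N.

Definition qdiff_den (u v : nat) : nat := ((nunpair u).2.+1 * (nunpair v).2.+1)%N.

Lemma natr_distn (x y : nat) : ((x - y) + (y - x))%N%:R = `|x%:R - y%:R| :> R.
Proof.
case: (leqP x y) => [le_xy | /ltnW le_yx].
- by rewrite (eqP le_xy) add0n natrB // distrC ger0_norm // subr_ge0 ler_nat.
- by rewrite [(y - x)%N](eqP le_yx) addn0 natrB // ger0_norm // subr_ge0 ler_nat.
Qed.

Lemma qdec_diff_sqr u v :
  (qdec u - qdec v) ^+ 2 = ((qdiff_num u v)%:R / (qdiff_den u v)%:R) ^+ 2 :> R.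
Proof.
rewrite /qdec /qdiff_num /qdiff_den.
case: (nunpair u) => a b; case: (nunpair v) => a' b' /=.
have b0 : (b.+1%:R : R) != 0 by rewrite pnatr_eq0.
have b'0 : (b'.+1%:R : R) != 0 by rewrite pnatr_eq0.
have -> : zz a / b.+1%:R - zz a' / b'.+1%:R =
    (zz a * b'.+1%:R - zz a' * b.+1%:R) / (b.+1 * b'.+1)%N%:R.
  by rewrite natrM; field; rewrite -!mulrS b0 b'0.
rewrite expr_div_n [in RHS]expr_div_n; congr (_ / _).
rewrite -real_normK ?num_real //; congr (_ ^+ 2); rewrite !zzE.
case: (odd a); case: (odd a') => /=.
- by rewrite natr_distn !natrM -normrN; congr `|_|; ring.
- have -> : - (zz_abs a)%:R * b'.+1%:R - (zz_abs a')%:R * b.+1%:R =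
     - (zz_abs a * b'.+1 + zz_abs a' * b.+1)%N%:R :> R by rewrite natrD !natrM; ring.
  by rewrite normrN normr_nat.
- have -> : (zz_abs a)%:R * b'.+1%:R - - (zz_abs a')%:R * b.+1%:R =
     (zz_abs a * b'.+1 + zz_abs a' * b.+1)%N%:R :> R by rewrite natrD !natrM; ring.
  by rewrite normr_nat.
- by rewrite natr_distn !natrM.
Qed.

Fixpoint sqdist_den (k c d : nat) : nat :=
  if k is k'.+1 then
    (sqdist_den k' (nunpair c).2 (nunpair d).2 * qdiff_den (nunpair c).1 (nunpair d).1 ^ 2)%N
  else 1%N.

Fixpoint sqdist_num (k c d : nat) : nat :=
  if k is k'.+1 then
    (sqdist_num k' (nunpair c).2 (nunpair d).2 * qdiff_den (nunpair c).1 (nunpair d).1 ^ 2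
     + qdiff_num (nunpair c).1 (nunpair d).1 ^ 2 * sqdist_den k' (nunpair c).2 (nunpair d).2)%N
  else 0%N.

Lemma sqdist_den_gt0 k c d : (0 < sqdist_den k c d)%N.
Proof.
elim: k c d => [|k IHk] c d //=.
by rewrite muln_gt0 IHk expn_gt0 /qdiff_den muln_gt0.
Qed.

Lemma sqdist_fracE k c d : (sqdist_num k c d)%:R / (sqdist_den k c d)%:R =
  \sum_(i < k) (qdec (vcomp c i) - qdec (vcomp d i)) ^+ 2 :> R.
Proof.
elim: k c d => [|k IHk] c d; first by rewrite big_ord0 /= mul0r.
rewrite big_ord_recl /= -IHk qdec_diff_sqr.
have : (qdiff_den (nunpair c).1 (nunpair d).1)%:R != 0 :> R.
  by rewrite pnatr_eq0 /qdiff_den muln_eq0.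
have : (sqdist_den k (nunpair c).2 (nunpair d).2)%:R != 0 :> R.
  by rewrite pnatr_eq0 -lt0n sqdist_den_gt0.
move: (qdiff_den _ _) (qdiff_num _ _) (sqdist_den _ _ _) (sqdist_num _ _ _) => D N A M A0 D0.
by rewrite natrD !natrM ?natrX; field; rewrite A0 D0.
Qed.

Lemma edist_vdecE n c d :
  edist (vdec n c) (vdec n d) = Num.sqrt ((sqdist_num n c d)%:R / (sqdist_den n c d)%:R).
Proof. by rewrite sqdist_fracE. Qed.

Lemma add_inv_lt_div_iff (e A B P N D : R) :
  0 <= e -> 0 < B -> 0 < P -> 0 < D -> e ^+ 2 = N / D ->
  e + P^-1 < A / B <-> B < A * P /\ N * (B * P) ^+ 2 < (A * P - B) ^+ 2 * D.
Proof.
move=> e0 B0 P0 D0 eND.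
have BP0 : 0 < B * P by apply: mulr_gt0.
have -> : N = e ^+ 2 * D by rewrite eND mulfVK // gt_eqF.
have -> : (e + P^-1 < A / B) = (e * (B * P) < A * P - B).
  rewrite -(ltr_pM2r BP0) ltrBrDr.
  have -> : (e + P^-1) * (B * P) = e * (B * P) + B.
    by rewrite mulrDl; congr (_ + _); field; rewrite gt_eqF.
  by have -> : A / B * (B * P) = A * P by field; rewrite gt_eqF.
have -> : e ^+ 2 * D * (B * P) ^+ 2 = (e * (B * P)) ^+ 2 * D by ring.
rewrite ltr_pM2r //.
have eBP : 0 <= e * (B * P) by rewrite mulr_ge0 // ltW.
split=> [lt_e | [lt_BAP lt_sq]].
- split; first lra.
  by rewrite -subr_gt0 subr_sqr mulr_gt0 //; lra.
- by move: lt_sq; rewrite -subr_gt0 subr_sqr pmulr_lgt0; lra.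
Qed.

Definition subballb (n c k b : nat) : bool :=
  let d := (nunpair b).1 in let r := (nunpair b).2 in
  let a := (nunpair r).1 in let b' := (nunpair r).2 in
  (b'.+1 < a.+1 * 2 ^ k)%N &&
  (sqdist_num n c d * (b'.+1 * 2 ^ k) ^ 2 <
     (a.+1 * 2 ^ k - b'.+1) ^ 2 * sqdist_den n c d)%N.

Lemma subballbP n c k b : subballb n c k b <->
  edist (vdec n c) (vdec n (nunpair b).1) + 2 ^- k < qpos (nunpair b).2.
Proof.
rewrite /subballb /qpos; case: (nunpair b) => d r /=; case: (nunpair r) => a b' /=.
rewrite (@add_inv_lt_div_iff _ _ _ _ (sqdist_num n c d)%:R (sqdist_den n c d)%:R);
  last 5 first.
- exact: edist_ge0.
- by rewrite ltr0n.
- by rewrite exprn_gt0.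
- by rewrite ltr0n sqdist_den_gt0.
- by rewrite edist_vdecE sqr_sqrtr // divr_ge0.
rewrite -(ltr_nat R) natrM natrX.
split=> [/andP[lt_b' lt_sq] | [lt_b' lt_sq]].
- split=> //; move: lt_sq; have /ltnW le_b' : (b'.+1 < a.+1 * 2 ^ k)%N.
    by rewrite -(ltr_nat R) natrM natrX.
  by rewrite -(ltr_nat R) !natrM natrB // !natrX !natrM natrX.
- apply/andP; split=> //; have /ltnW le_b' : (b'.+1 < a.+1 * 2 ^ k)%N.
    by rewrite -(ltr_nat R) natrM natrX.
  by rewrite -(ltr_nat R) !natrM natrB // !natrX !natrM natrX.
Qed.

Definition twice_pow2_ltb (t w : nat) : bool :=
  let a := (nunpair w).1 in let b := (nunpair w).2 in ~~ odd a && (2 * b.+1 < a./2 * 2 ^ t)%N.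

Lemma twice_pow2_ltbP t w : twice_pow2_ltb t w <-> 2 * 2 ^- t < qdec w.
Proof.
rewrite /twice_pow2_ltb /qdec; case: (nunpair w) => a b /=.
have b0 : 0 < (b.+1%:R : R) by rewrite ltr0n.
have t0 : 0 < (2 ^+ t : R) by rewrite exprn_gt0.
rewrite /zz; case: (odd a) => /=.
- split=> // lt_q.
  have q0 : - (uphalf a)%:R / b.+1%:R <= 0 :> R by rewrite mulNr oppr_le0 divr_ge0 // ltW.
  have t0' : 0 < 2 * 2 ^- t :> R by rewrite mulr_gt0 // invr_gt0.
  by have := lt_le_trans (lt_trans t0' lt_q) q0; rewrite ltxx.
- rewrite -(ltr_nat R) !natrM natrX -(ltr_pM2r b0) -(ltr_pM2r t0) mulfVK ?gt_eqF //.
  by have -> : 2 * (2 ^+ t)^-1 * b.+1%:R * 2 ^+ t = 2%:R * b.+1%:R :> R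
    by field; rewrite gt_eqF.
Qed.

Section DecisionsComputable.
Variable P : (nat -> nat) -> nat -> Prop.
Implicit Types C D K T U V W : (nat -> nat) -> nat -> nat.
Notation pc := (pcomputable P).

Lemma pcomputable_zz_abs U : pc U -> pc (fun p x => zz_abs (U p x)).
Proof. by move=> HU; apply/pcomputable_half/pcomputableD/pcomputable_odd. Qed.

Lemma pcomputable_qdiff_num U V : pc U -> pc V -> pc (fun p x => qdiff_num (U p x) (V p x)).
Proof.
move=> HU HV; rewrite /qdiff_num.
have za := pcomputable_zz_abs (pcomputable_fst HU).
have za' := pcomputable_zz_abs (pcomputable_fst HV).
have b1 := pcomputableS (pcomputable_snd HU); have b1' := pcomputableS (pcomputable_snd HV).
apply: pcomputable_if.
- by apply: pcomputable_eqb; apply: pcomputable_odd; apply: pcomputable_fst.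
- by apply: pcomputableD; apply: pcomputableB; apply: pcomputableM.
- by apply: pcomputableD; apply: pcomputableM.
Qed.

Lemma pcomputable_qdiff_den U V : pc U -> pc V -> pc (fun p x => qdiff_den (U p x) (V p x)).
Proof. by move=> HU HV; apply: pcomputableM; apply/pcomputableS/pcomputable_snd. Qed.

Lemma pcomputable_sqdist_den k C D : pc C -> pc D ->
  pc (fun p x => sqdist_den k (C p x) (D p x)).
Proof.
elim: k C D => [|k IHk] C D HC HD /=; first exact: pcomputable_const.
apply: pcomputableM; first by apply: IHk; apply: pcomputable_snd.
by apply: pcomputableX (pcomputable_const _ 2); apply: pcomputable_qdiff_den;
  apply: pcomputable_fst.
Qed.

Lemma pcomputable_sqdist_num k C D : pc C -> pc D ->
  pc (fun p x => sqdist_num k (C p x) (D p x)).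
Proof.
elim: k C D => [|k IHk] C D HC HD /=; first exact: pcomputable_const.
apply: pcomputableD; apply: pcomputableM.
- by apply: IHk; apply: pcomputable_snd.
- by apply: pcomputableX (pcomputable_const _ 2); apply: pcomputable_qdiff_den;
    apply: pcomputable_fst.
- by apply: pcomputableX (pcomputable_const _ 2); apply: pcomputable_qdiff_num;
    apply: pcomputable_fst.
- by apply: pcomputable_sqdist_den; apply: pcomputable_snd.
Qed.

Lemma pcomputable_subballb n C K W : pc C -> pc K -> pc W ->
  pc (fun p x => subballb n (C p x) (K p x) (W p x)).
Proof.
move=> HC HK HW; rewrite /subballb.
have d := pcomputable_fst HW; have a1 := pcomputableS (pcomputable_fst (pcomputable_snd HW)).
have b1 := pcomputableS (pcomputable_snd (pcomputable_snd HW)).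
have p2 := pcomputableX (pcomputable_const P 2) HK.
have sq := fun U (HU : pc U) => pcomputableX HU (pcomputable_const P 2).
apply: pcomputable_andb; apply: pcomputable_ltn.
- exact: b1.
- exact: pcomputableM.
- by apply: pcomputableM; [apply: pcomputable_sqdist_num | apply/sq/pcomputableM].
- by apply: pcomputableM; [apply/sq/pcomputableB/b1/pcomputableM | apply: pcomputable_sqdist_den].
Qed.

Lemma pcomputable_twice_pow2_ltb T W : pc T -> pc W ->
  pc (fun p x => twice_pow2_ltb (T p x) (W p x)).
Proof.
move=> HT HW; rewrite /twice_pow2_ltb; apply: pcomputable_andb.
  by apply/pcomputable_negb/pcomputable_odd/pcomputable_fst.
apply: pcomputable_ltn.
- by apply: pcomputableM (pcomputable_const _ 2) _; apply/pcomputableS/pcomputable_snd.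
- apply: pcomputableM; first by apply/pcomputable_half/pcomputable_fst.
  exact: pcomputableX (pcomputable_const _ 2) HT.
Qed.

End DecisionsComputable.

Local Open Scope classical_set_scope.

Lemma zz_surj (a : int) : exists z, zz z = a%:~R :> R.
Proof.
case: a => k; first by exists k.*2; rewrite /zz odd_double doubleK.
by exists k.*2.+1; rewrite /zz /= odd_double /= NegzE doubleK mulrNz pmulrn.
Qed.

Lemma qdec_approx (r e : R) : 0 < e -> exists z, `|qdec z - r| < e.
Proof.
move=> e0; have [k lt_k] := exists_pow2_lt e0.
have [z zE] := zz_surj (Num.floor (r * 2 ^+ k)).
exists (npair z (2 ^ k - 1)); rewrite /qdec npairK.
have -> : (2 ^ k - 1).+1%:R = 2 ^+ k :> R by rewrite subn1 prednK ?expn_gt0 // natrX.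
have k0 : 0 < (2 ^+ k : R) by rewrite exprn_gt0.
have /andP[lb ub] := floor_itv (r * 2 ^+ k); rewrite intrD in ub.
rewrite zE -{2}[r](mulfK (lt0r_neq0 k0)) -mulrBl normrM (ger0_norm (ltW (pow2_gt0 k))).
apply: le_lt_trans lt_k; rewrite -[leRHS]mul1r ler_pM2r ?pow2_gt0 // ler_norml.
by apply/andP; split; lra.
Qed.

Fixpoint vcode (l : seq nat) : nat := if l is h :: t then npair h (vcode t) else 0%N.

Lemma vcomp_vcode l i : (i < size l)%N -> vcomp (vcode l) i = nth 0%N l i.
Proof. by elim: l i => [|h t IHt] [|i] //= lt_i; rewrite npairK // IHt. Qed.

Lemma vdec_dense n (x : 'I_n -> R) (e : R) : 0 < e -> exists c, edist (vdec n c) x < e.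
Proof.
move=> e0; have en0 : 0 < e / n.+1%:R by rewrite divr_gt0 // ltr0n.
have /choice[z zP] : forall i : 'I_n, exists z, `|qdec z - x i| < e / n.+1%:R.
  by move=> i; apply: qdec_approx.
exists (vcode [seq z i | i <- enum 'I_n]).
apply: le_lt_trans (edist_le_sum_dist _ _) _.
have -> : \sum_i `|vdec n (vcode [seq z i | i <- enum 'I_n]) i - x i| =
          \sum_i `|qdec (z i) - x i|.
  apply: eq_bigr => i _; rewrite /vdec vcomp_vcode; last by rewrite size_map size_enum_ord.
  by rewrite (nth_map i) ?size_enum_ord ?nth_ord_enum.
have : \sum_i `|qdec (z i) - x i| <= \sum_(i < n) e / n.+1%:R.
  by apply: ler_sum => j _; apply: ltW.
move=> le_sum; apply: le_lt_trans le_sum _.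
rewrite sumr_const card_ord -[ltRHS](divfK (_ : n.+1%:R != 0)) ?pnatr_eq0 //.
by rewrite -[_ *+ n]mulr_natr ltr_pM2l // ltr_nat.
Qed.

Lemma qpos_pow2 t : qpos (npair 0 (2 ^ t - 1)) = 2 ^- t :> R.
Proof. by rewrite /qpos npairK subn1 prednK ?expn_gt0 // natrX mul1r. Qed.

Lemma rhon_name_const n c : rhon_name (fun _ => c) (vdec n c).
Proof. by move=> k; rewrite edistxx ltW ?pow2_gt0. Qed.

(* The use principle turns a program computing [f] into a modulus of
   continuity of [f] at each point, tested on rational points. *)
Lemma computable_on_modulus n m (X : set ('I_n -> R)) (f : ('I_n -> R) -> 'I_m -> R) :
  computable_on X f -> forall x, X x -> forall t, exists N, forall c, X (vdec n c) ->
    edist (vdec n c) x <= 2 ^- N.+1 -> edist (f (vdec n c)) (f x) <= 2 ^- t.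
Proof.
move=> [ef Hf] x Xx t.
have /choice[px pxP] : forall j, exists c, edist (vdec n c) x < 2 ^- j.+1.
  by move=> j; apply: vdec_dense; apply: pow2_gt0.
have px_name : rhon_name px x.
  by move=> j; apply: le_trans (ltW (pxP j)) (pow2_le (leqnSn j)).
have [q [q_ev q_name]] := Hf x px Xx px_name.
have [N HN] := eval_use (q_ev t.+1).
exists N => c Xc cx.
pose p' j := if (j < N)%N then px j else c.
have agree_p' : agree_below px p' N by move=> i lt_iN; rewrite /p' lt_iN.
have p'_name : rhon_name p' (vdec n c).
  move=> j; rewrite /p'; case: ltnP => [lt_jN | _]; last by rewrite edistxx ltW ?pow2_gt0.
  apply: le_trans (edist_triangle _ x _) _; rewrite (edistC x).
  have := pxP j; have := pow2_le (ltnW lt_jN : (j.+1 <= N.+1)%N); have := pow2S j.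
  by lra.
have [q' [q'_ev q'_name]] := Hf _ p' Xc p'_name.
have E := eval_functional (HN p' agree_p') (q'_ev t.+1).
apply: le_trans (edist_triangle _ (vdec m (q t.+1)) _) _.
rewrite edistC; have := q'_name t.+1; have := q_name t.+1; have := pow2S t.
by rewrite -E; lra.
Qed.

Section MooBounds.
Variables (n m : nat) (X : set ('I_n -> R)) (f : ('I_n -> R) -> 'I_m -> R).

Lemma le_Moo x k s : 0 <= s ->
  ecball (f x) s `<=` f @` (eball x (2 ^- k) `&` X) -> (s%:E <= Moo X f x k)%E.
Proof. by move=> s0 H; apply: ereal_sup_ubound; exists s. Qed.

Lemma lt_MooP x k r : (r%:E < Moo X f x k)%E -> exists s,
  [/\ 0 <= s, ecball (f x) s `<=` f @` (eball x (2 ^- k) `&` X) & r < s].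
Proof.
move=> r_lt; apply: contrapT => none; move: r_lt; apply/negP; rewrite -leNgt.
apply/ereal_supP => _ [s [s0 Hs] <-]; rewrite lee_fin leNgt; apply/negP => lt_rs.
by apply: none; exists s.
Qed.

(* [f] maps the ball of radius [2 ^- K.+1] around [x] onto a neighbourhood of
   [f x]; its radius bounds Moo from below at every nearby point [y] whose
   image stays close to [f x]. *)
Lemma open_map_Moo_lb U x K : open_map_on X f -> eopen U -> U `<=` X -> U x ->
  exists t, forall y, edist y x < 2 ^- K.+1 -> edist (f y) (f x) <= 2 ^- t.+2 ->
    ((2 * 2 ^- t)%:E < Moo X f y K)%E.
Proof.
move=> fo oU UX Ux; set W := eball x (2 ^- K.+1) `&` U.
have oW : eopen W by apply: eopenI oU; apply: eopen_eball.
have xW : W x by split; rewrite // /eball /= edistxx pow2_gt0.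
have [r r0 rW] := fo W oW (fun w Ww => UX w Ww.2) (f x) (ex_intro2 _ _ x xW erefl).
have [t lt_t] : exists t, 2 ^- t < r / 4 by apply: exists_pow2_lt; lra.
exists t => y yx fyx.
have t0 := pow2_gt0 t; have t1 := pow2S t; have t2 := pow2S t.+1.
apply: lt_le_trans (le_Moo (s := 3 * 2 ^- t) _ _); first by rewrite lte_fin; lra.
  by rewrite mulr_ge0 // ltW.
move=> z fyz; have /rW[w [xw Uw] <-] : eball (f x) r z.
  have := edist_triangle (f x) (f y) z; rewrite [edist (f x) (f y)]edistC.
  by rewrite /ecball /eball /= in fyz *; lra.
exists w => //; split; last exact: UX.
have := edist_triangle y x w; have := pow2S K; rewrite /eball /= in xw *.
by lra.
Qed.

End MooBounds.

(* A task asks: is the ball of radius [2 ^- k] around the rational point [c]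
   inside the [i]-th listed ball of [U], and does the [j]-th lower
   approximation of [Moo_f(c, k)] exceed [2 * 2 ^- t]?  If so, the ball of
   radius [2 ^- t] around a [2 ^- t.+2]-approximation of [f c] lies in
   [f[U]]. *)
Definition task i c k j t := npair i (npair c (npair k (npair j t))).
Definition task_ball q := (nunpair q).1.
Definition task_center q := (nunpair (nunpair q).2).1.
Definition task_rad q := (nunpair (nunpair (nunpair q).2).2).1.
Definition task_step q := (nunpair (nunpair (nunpair (nunpair q).2).2).2).1.
Definition task_prec q := (nunpair (nunpair (nunpair (nunpair q).2).2).2).2.

Lemma taskK i c k j t : let q := task i c k j t in
  [/\ task_ball q = i, task_center q = c, task_rad q = k, task_step q = j &
      task_prec q = t].
Proof. by rewrite /task_ball /task_center /task_rad /task_step /task_prec /task !npairK. Qed.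

Definition valid_task n (p : nat -> nat) q :=
  (0 < p (task_ball q))%N && subballb n (task_center q) (task_rad q) (p (task_ball q)).-1.

(* [MQ c k] is a rho_<-name of [Moo_f(vdec c, k)] and [FQ c] a Cauchy name
   of [f (vdec c)]. *)
Definition task_image (MQ : nat -> nat -> nat -> nat) (FQ : nat -> nat -> nat) q :=
  let c := task_center q in let t := task_prec q in
  if twice_pow2_ltb t (MQ c (task_rad q) (task_step q))
  then (npair (FQ c t.+2) (npair 0 (2 ^ t - 1))).+1 else 0%N.

Definition image_name n MQ FQ (p : nat -> nat) q :=
  if valid_task n p q then task_image MQ FQ q else 0%N.

Lemma valid_task_pcomputable n : pcomputable everywhere (fun p q => valid_task n p q).
Proof.
have ball := pcomputable_fst (@pcomputable_id everywhere).
apply: pcomputable_andb.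
  exact: pcomputable_ltn (pcomputable_const _ 0) (pcomputable_oracle ball).
apply: pcomputable_subballb (pcomputable_pred (pcomputable_oracle ball)).
  by apply/pcomputable_fst/pcomputable_snd/pcomputable_id.
by apply/pcomputable_fst/pcomputable_snd/pcomputable_snd/pcomputable_id.
Qed.

Lemma task_image_pcomputable (em ef : prog) (Xc : nat -> Prop)
    (MQ : nat -> nat -> nat -> nat) (FQ : nat -> nat -> nat) :
  (forall c k j, Xc c -> eval (fun _ => 0%N) em (npair (npair c k) j) (MQ c k j)) ->
  (forall c t, Xc c -> eval (fun _ => c) ef t (FQ c t)) ->
  pcomputable (fun _ q => Xc (task_center q)) (fun _ q => task_image MQ FQ q).
Proof.
move=> em_ok ef_ok; set P := fun _ q => _.
have center : pcomputable P (fun _ q => task_center q).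
  by apply/pcomputable_fst/pcomputable_snd/pcomputable_id.
have rad : pcomputable P (fun _ q => task_rad q).
  by apply/pcomputable_fst/pcomputable_snd/pcomputable_snd/pcomputable_id.
have step : pcomputable P (fun _ q => task_step q).
  by apply/pcomputable_fst/pcomputable_snd/pcomputable_snd/pcomputable_snd/pcomputable_id.
have prec : pcomputable P (fun _ q => task_prec q).
  by do 4 apply: pcomputable_snd; apply: pcomputable_id.
have MQ_ok : pcomputable P (fun _ q => MQ (task_center q) (task_rad q) (task_step q)).
  apply: (pcomputable_prog (e := inline_oracle em) (pcomputable_pair (pcomputable_const _ 0)
    (pcomputable_pair (pcomputable_pair center rad) step))).
  by move=> p q Pq; apply/eval_inline_oracle/em_ok.
have FQ_ok : pcomputable P (fun _ q => FQ (task_center q) (task_prec q).+2).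
  apply: (pcomputable_prog (e := inline_oracle ef)
    (pcomputable_pair center (pcomputableS (pcomputableS prec)))).
  by move=> p q Pq; apply/eval_inline_oracle/ef_ok.
apply: pcomputable_if; first exact: pcomputable_twice_pow2_ltb.
  apply/pcomputableS/pcomputable_pair/pcomputable_pair/pcomputableB => //;
    [exact: pcomputable_const | exact: pcomputableX (pcomputable_const _ 2) prec |
     exact: pcomputable_const].
exact: pcomputable_const.
Qed.

Lemma image_name_computable n (em ef : prog) (Xc : nat -> Prop)
    (MQ : nat -> nat -> nat -> nat) (FQ : nat -> nat -> nat) :
  (forall c k j, Xc c -> eval (fun _ => 0%N) em (npair (npair c k) j) (MQ c k j)) ->
  (forall c t, Xc c -> eval (fun _ => c) ef t (FQ c t)) ->
  exists e, forall p, (forall q, valid_task n p q -> Xc (task_center q)) ->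
    computes e p (image_name n MQ FQ p).
Proof.
move=> em_ok ef_ok; have [evalid valid_ok] := valid_task_pcomputable n.
have [eimg img_ok] := task_image_pcomputable em_ok ef_ok.
(* Primitive recursion on the validity bit runs [eimg] only when the bit is
   [1], i.e. only on inputs where its correctness is guaranteed. *)
exists (PComp (PRec PZero (PComp eimg PFst)) (PPair PId evalid)) => p Xvalid q.
econstructor; first by constructor; [constructor | exact: valid_ok].
rewrite /image_name; case valid: (valid_task n p q) => /=.
- constructor; econstructor; first by do 2 constructor.
  by econstructor; [exact: eval_fst | apply/img_ok/Xvalid].
- by do 3 constructor.
Qed.

Section ImageName.
Variables (n m : nat) (X : set ('I_n -> R)) (f : ('I_n -> R) -> 'I_m -> R).
Variables (MQ : nat -> nat -> nat -> nat) (FQ : nat -> nat -> nat).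
Hypothesis MQ_name :
  forall c k, X (vdec n c) -> rholt_name (MQ c k) (Moo X f (vdec n c) k).
Hypothesis FQ_name : forall c, X (vdec n c) -> rhon_name (FQ c) (f (vdec n c)).
Variables (U : set ('I_n -> R)) (p : nat -> nat).
Hypotheses (UX : U `<=` X) (pU : theta_name p U).

Lemma valid_task_sub q : valid_task n p q ->
  eball (vdec n (task_center q)) (2 ^- task_rad q) `<=` U.
Proof.
move=> /andP[pq0 /subballbP sub] y cy; apply/pU; exists (task_ball q).
rewrite -(prednK pq0) /bdec /eball /=.
have := edist_triangle (vdec n (nunpair (p (task_ball q)).-1).1) (vdec n (task_center q)) y.
by rewrite edistC /eball /= in sub cy *; lra.
Qed.

Lemma valid_task_center q : valid_task n p q -> X (vdec n (task_center q)).
Proof.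
by move=> /valid_task_sub sub; apply/UX/sub; rewrite /eball /= edistxx pow2_gt0.
Qed.

Lemma image_name_sub q : bdec m (image_name n MQ FQ p q) `<=` f @` U.
Proof.
rewrite /image_name; case valid: (valid_task n p q); last by [].
rewrite /task_image; case: ifP => [/twice_pow2_ltbP lt_MQ | _]; last by [].
have Xc := valid_task_center valid.
move: (task_center q) (task_rad q) (task_step q) (task_prec q) Xc lt_MQ (valid_task_sub valid)
  => c k j t Xc lt_MQ sub y.
rewrite /bdec npairK qpos_pow2 /eball /= => ay.
have [MQ_lb _] := @MQ_name c k Xc.
have : ((edist (f (vdec n c)) y)%:E < Moo X f (vdec n c) k)%E.
  apply: lt_le_trans (MQ_lb j); rewrite lte_fin.
  have := edist_triangle (f (vdec n c)) (vdec m (FQ c t.+2)) y.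
  have := FQ_name Xc t.+2; have := pow2S t; have := pow2S t.+1; have := pow2_gt0 t.
  by rewrite [edist (f _) (vdec m _)]edistC; lra.
move=> /lt_MooP[s [_ sub_s lt_s]]; have [w [cw _] <-] := sub_s y (ltW lt_s).
by exists w => //; apply: sub.
Qed.

Lemma image_name_cover x : computable_on X f -> open_map_on X f -> eopen U -> U x ->
  exists q, bdec m (image_name n MQ FQ p q) (f x).
Proof.
move=> fc fo oU Ux; have [i] := (pU x).1 Ux.
case pi: (p i) => [|b] //=; rewrite /eball /=.
set d := vdec n _; set rho := qpos _ => dx.
have [k lt_k] : exists k, 2 ^- k < (rho - edist d x) / 2 by apply: exists_pow2_lt; lra.
have [t Moo_big] := open_map_Moo_lb k fo oU UX Ux.
have [N fcont] := computable_on_modulus fc (UX Ux) t.+2.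
have [c] : exists c, edist (vdec n c) x < Num.min (2 ^- N.+1) (2 ^- k.+1).
  by apply: vdec_dense; rewrite lt_min !pow2_gt0.
rewrite lt_min => /andP[cxN cxk].
have valid j : valid_task n p (task i c k j t).
  rewrite /valid_task; have [-> -> -> _ _] := taskK i c k j t; rewrite pi /=.
  apply/subballbP; have := edist_triangle (vdec n c) x d; have := pow2S k.
  by rewrite -/d -/rho [edist x d]edistC; lra.
have Xc : X (vdec n c) by have := valid_task_center (valid 0%N); have [_ ->] := taskK i c k 0 t.
have fcx := fcont c Xc (ltW cxN).
have [j lt_j] : exists j, 2 * 2 ^- t < qdec (MQ c k j).
  by apply: (@MQ_name c k Xc).2; apply: Moo_big.
exists (task i c k j t); rewrite /image_name valid /task_image.
have [_ -> -> -> ->] := taskK i c k j t.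
have /twice_pow2_ltbP -> := lt_j; rewrite /bdec npairK qpos_pow2 /eball /=.
have := edist_triangle (vdec m (FQ c t.+2)) (f (vdec n c)) (f x).
by have := FQ_name Xc t.+2; have := pow2S t; have := pow2S t.+1; have := pow2_gt0 t; lra.
Qed.

Lemma image_name_theta : computable_on X f -> open_map_on X f -> eopen U ->
  theta_name (image_name n MQ FQ p) (f @` U).
Proof.
move=> fc fo oU y; split; last by move=> [q]; apply: image_name_sub.
by move=> [x Ux <-]; apply: image_name_cover.
Qed.

End ImageName.

Lemma computable_on_table n m (X : set ('I_n -> R)) (f : ('I_n -> R) -> 'I_m -> R) :
  computable_on X f -> exists ef FQ,
    (forall c t, X (vdec n c) -> eval (fun _ => c) ef t (FQ c t)) /\
    (forall c, X (vdec n c) -> rhon_name (FQ c) (f (vdec n c))).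
Proof.
move=> [ef Hf]; exists ef.
have /choice[FQ FQ_ok] : forall c, exists q, X (vdec n c) ->
    computes ef (fun _ => c) q /\ rhon_name q (f (vdec n c)).
  move=> c; have [Xc|nXc] := pselect (X (vdec n c)); last by exists (fun _ => 0%N) => /nXc.
  by have [q qP] := Hf _ _ Xc (rhon_name_const n c); exists q => _.
by exists FQ; split=> [c t /FQ_ok[ev _] | c /FQ_ok[]] //; apply: ev.
Qed.

Lemma moo_lower_table n m (X : set ('I_n -> R)) (f : ('I_n -> R) -> 'I_m -> R) :
  moo_lower_computable X f -> exists em MQ,
    (forall c k j, X (vdec n c) -> eval (fun _ => 0%N) em (npair (npair c k) j) (MQ c k j)) /\
    (forall c k, X (vdec n c) -> rholt_name (MQ c k) (Moo X f (vdec n c) k)).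
Proof.
move=> [em Hm]; exists em.
have /choice[MQ MQ_ok] : forall ck : nat * nat, exists q, X (vdec n ck.1) ->
    (forall j, eval (fun _ => 0%N) em (npair (npair ck.1 ck.2) j) (q j)) /\
    rholt_name q (Moo X f (vdec n ck.1) ck.2).
  move=> [c k]; have [Xc|nXc] := pselect (X (vdec n c)); last by exists (fun _ => 0%N) => /nXc.
  by have [q qP] := Hm c k Xc; exists q => _.
exists (fun c k => MQ (c, k)).
by split=> [c k j /(MQ_ok (c, k))[ev _] | c k /(MQ_ok (c, k))[]] //; apply: ev.
Qed.

Theorem lemma6 (n m : nat) (X : set ('I_n -> R)) (f : ('I_n -> R) -> ('I_m -> R)) :
  re_open X ->
  computable_on X f ->
  open_map_on X f ->
  moo_lower_computable X f ->
  effectively_open X f.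
Proof.
move=> _ fc fo moo_c.
have [ef [FQ [ef_ok FQ_name]]] := computable_on_table fc.
have [em [MQ [em_ok MQ_name]]] := moo_lower_table moo_c.
have [e e_ok] := @image_name_computable n em ef (fun c => X (vdec n c)) MQ FQ em_ok ef_ok.
exists e => U p oU UX pU; exists (image_name n MQ FQ p); split.
  by apply: e_ok => q; apply: valid_task_center UX pU q.
exact: (image_name_theta MQ_name FQ_name UX pU fc fo oU).
Qed.
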